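(* Let $\mathcal C\subseteq\{0,1\}^n$ and $\mathcal D\subseteq\{0,1\}^m$ be neural codes and let $\phi:R_\mathcal D\to R_\mathcal C$ be a ring homomorphism. (i) There exists a ring homomorphism $\tau:R[m]\to R[n]$ which is compatible with $\phi$; thus $\phi$ is an $R[m]$-module homomorphism (with $R_\mathcal C$ viewed as an $R[m]$-module via $\tau$). (ii) The set of ring homomorphisms $\tau:R[m]\to R[n]$ compatible with $\phi$ is exactly the set of ring homomorphisms $\tau:R[m]\to R[n]$ such that $(\phi(f))^{-1}(1)\subseteq(\tau(f))^{-1}(1)$ for all $f\in R_\mathcal D$.
   Context: For a code $\mathcal C\subseteq\{0,1\}^n$, the neural ring $R_\mathcal C=\mathbb F_2[x_1,\dots,x_n]/I_\mathcal C$, where $I_\mathcal C$ is the ideal of polynomials vanishing on $\mathcal C$, is identified with the ring of all functions $\mathcal C\to\{0,1\}=\mathbb F_2$. $R[n]$ denotes the neural ring of the full code $\{0,1\}^n$, i.e. $\mathbb F_2[x_1,\dots,x_n]/\langle x_i^2-x_i\rangle$, the ring of all functions $\{0,1\}^n\to\{0,1\}$. $R_\mathcal C$ is an $R[n]$-module via $(r\cdot f)(c)=r(c)f(c)$. An element $f\in R_\mathcal D$ (a function on $\mathcal D\subseteq\{0,1\}^m$) is also regarded as an element of $R[m]$, namely the function on $\{0,1\}^m$ that is $1$ exactly on $f^{-1}(1)$; in particular $\tau(f)$ makes sense for $\tau:R[m]\to R[n]$. A ring homomorphism $\tau:R[m]\to R[n]$ is compatible with a group homomorphism $\phi:R_\mathcal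 D\to R_\mathcal C$ if $\phi(r\cdot f)=\tau(r)\cdot\phi(f)$ for all $r\in R[m]$, $f\in R_\mathcal D$, i.e. $\phi$ is an $R[m]$-module homomorphism when $R_\mathcal C$ is made an $R[m]$-module via $r\cdot g=\tau(r)\cdot g$. *)

(* Neural rings over F_2 = bool (addition = xorb, multiplication = andb). *)
From mathcomp Require Import all_boot all_order.
Set Implicit Arguments. Unset Strict Implicit. Unset Printing Implicit Defensive.

Definition cube (n : nat) : finType := {ffun 'I_n -> bool}.

(* Neural ring of a code C: the ring of all functions C -> F_2. *)
Definition neural_ring (n : nat) (C : {set cube n}) : Type :=
  {ffun {x : cube n | x \in C} -> bool}.

Definition full_ring (n : nat) : Type := {ffun cube n -> bool}.

Definition is_ring_hom (A B : finType)
    (h : {ffun A -> bool} -> {ffun B -> bool}) : Prop :=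
  [/\ forall f g : {ffun A -> bool}, h [ffun x => f x (+) g x] = [ffun y => h f y (+) h g y],
      forall f g : {ffun A -> bool}, h [ffun x => f x && g x] = [ffun y => h f y && h g y]
    & h [ffun _ => true] = [ffun _ => true]].

Definition act (n : nat) (C : {set cube n}) (r : full_ring n) (f : neural_ring C)
  : neural_ring C := [ffun c => r (val c) && f c].

(* f in R_D regarded as an element of R[m]: 1 exactly on f^{-1}(1). *)
Definition ext (m : nat) (D : {set cube m}) (f : neural_ring D) : full_ring m :=
  [ffun y => if insub y is Some y' then f y' else false].

Definition compatible (n m : nat) (C : {set cube n}) (D : {set cube m})
    (tau : full_ring m -> full_ring n) (phi : neural_ring D -> neural_ring C) : Prop :=
  forall (r : full_ring m) (f : neural_ring D), phi (act r f) = act (tau r) (phi f).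

From mathcomp Require Import all_boot all_order.
Set Implicit Arguments. Unset Strict Implicit. Unset Printing Implicit Defensive.

(* A unital ring homomorphism between rings of F_2-valued functions on finite
   sets is composition with a map of the underlying sets: at each point b,
   the indicators of the singletons {a} sum to 1, so some [h (pt a)] is 1 at b,
   and then [f * pt a] is either [pt a] or 0 according to [f a].  Hence
   phi is composition with some p : C -> D and tau with some q : {0,1}^n ->
   {0,1}^m, and both compatibility and the support condition of (ii) say
   exactly that q extends p; such a q always exists. *)

Definition precomp (A B : finType) (p : B -> A) (f : {ffun A -> bool}) :
  {ffun B -> bool} := [ffun b => f (p b)].

Definition pt (A : finType) (a : A) : {ffun A -> bool} := [ffun x => x == a].

Lemma precompE (A B : finType) (p : B -> A) f b : precomp p f b = f (p b).
Proof. exact: ffunE. Qed.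

Lemma precomp_ring_hom (A B : finType) (p : B -> A) : is_ring_hom (precomp p).
Proof. by split=> *; apply/ffunP=> b; rewrite !ffunE. Qed.

Section RingHomIsPrecomp.

Variables (A B : finType) (h : {ffun A -> bool} -> {ffun B -> bool}).
Hypothesis hh : is_ring_hom h.

Lemma ring_hom0 b : h [ffun _ => false] b = false.
Proof.
have [hD _ _] := hh.
have := hD [ffun _ => false] [ffun _ => false].
have -> : [ffun x => ([ffun _ => false] : {ffun A -> bool}) x (+) [ffun _ => false] x]
   = [ffun _ => false] by apply/ffunP=> x; rewrite !ffunE.
by move=> /ffunP /(_ b); rewrite ffunE addbb.
Qed.

Lemma ring_homU (f g : {ffun A -> bool}) b :
  h [ffun x => f x || g x] b = h f b || h g b.
Proof.
have [hD hM _] := hh.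
have -> : [ffun x => f x || g x] =
    [ffun x => f x (+) [ffun y => g y (+) [ffun z => f z && g z] y] x].
  by apply/ffunP=> x; rewrite !ffunE; case: (f x); case: (g x).
by rewrite hD ffunE hD ffunE hM ffunE; case: (h f b); case: (h g b).
Qed.

Lemma ring_hom_mem (s : seq A) b :
  h [ffun x => x \in s] b = has (fun a => h (pt a) b) s.
Proof.
elim: s => [|a s IH] /=.
  have -> : [ffun x => x \in ([::] : seq A)] = [ffun _ => false].
    by apply/ffunP=> x; rewrite !ffunE.
  exact: ring_hom0.
have -> : [ffun x => x \in a :: s] = [ffun x => pt a x || [ffun y => y \in s] x].
  by apply/ffunP=> x; rewrite !ffunE in_cons.
by rewrite ring_homU IH.
Qed.

Lemma ring_hom_pt_eval a b : h (pt a) b -> forall f, h f b = f a.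
Proof.
have [_ hM _] := hh.
move=> hab f; have /ffunP/(_ b) := hM f (pt a).
rewrite ffunE hab andbT => <-.
case fa: (f a).
  have -> : [ffun x => f x && pt a x] = pt a by
    apply/ffunP=> x; rewrite !ffunE; case: eqP => [->|]; rewrite ?fa ?andbF.
  exact: hab.
have -> : [ffun x => f x && pt a x] = [ffun _ => false] by
  apply/ffunP=> x; rewrite !ffunE; case: eqP => [->|]; rewrite ?fa ?andbF.
exact: ring_hom0.
Qed.

Lemma ring_hom_eval b : exists a, forall f, h f b = f a.
Proof.
have [_ _ h1] := hh.
have : has (fun a => h (pt a) b) (enum A).
  rewrite -ring_hom_mem; have -> : [ffun x => x \in enum A] = [ffun _ => true].
    by apply/ffunP=> x; rewrite !ffunE mem_enum.
  by rewrite h1 ffunE.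
by case/hasP=> a _ /ring_hom_pt_eval; exists a.
Qed.

Lemma ring_homP : exists p : B -> A, h =1 precomp p.
Proof.
have [p hp] := fin_all_exists ring_hom_eval.
by exists p => f; apply/ffunP=> b; rewrite ffunE hp.
Qed.

End RingHomIsPrecomp.

Lemma ext_val (m : nat) (D : {set cube m}) (f : neural_ring D)
    (d : {y : cube m | y \in D}) :
  ext f (val d) = f d.
Proof. by rewrite ffunE valK. Qed.

Lemma ext_pt (m : nat) (D : {set cube m}) (d : {y : cube m | y \in D}) y :
  ext (pt d) y = (y == val d).
Proof.
rewrite ffunE; case: insubP => [d' _ <-|yD]; first by rewrite ffunE.
by apply/esym/eqP=> yd; move: yD; rewrite yd (valP d).
Qed.

Section CompatiblePrecomp.

Variables (n m : nat) (C : {set cube n}) (D : {set cube m}).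
Variables (phi : neural_ring D -> neural_ring C) (tau : full_ring m -> full_ring n).
Variables (p : {x : cube n | x \in C} -> {y : cube m | y \in D}) (q : cube n -> cube m).
Hypotheses (phiE : phi =1 precomp p) (tauE : tau =1 precomp q).

Lemma compatible_precompP :
  compatible tau phi <-> forall c, q (val c) = val (p c).
Proof.
split=> [compat c | qp r f]; last first.
  by apply/ffunP=> c; rewrite phiE tauE !ffunE phiE precompE qp.
have /ffunP/(_ c) := compat (pt (val (p c))) [ffun _ => true].
by rewrite phiE tauE !ffunE phiE !ffunE !andbT eqxx => /esym/eqP.
Qed.

Lemma support_precompP :
  (forall f c, phi f c = true -> tau (ext f) (val c) = true) <->
  forall c, q (val c) = val (p c).
Proof.
split=> [supp c | qp f c]; last by rewrite phiE tauE !precompE qp ext_val.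
have := supp (pt (p c)) c.
by rewrite phiE tauE !precompE ffunE eqxx ext_pt => /(_ erefl) /eqP.
Qed.

End CompatiblePrecomp.

Theorem theorem3 (n m : nat) (C : {set cube n}) (D : {set cube m})
    (phi : neural_ring D -> neural_ring C) :
  is_ring_hom phi ->
  (exists tau : full_ring m -> full_ring n, is_ring_hom tau /\ compatible tau phi) /\
  (forall tau : full_ring m -> full_ring n, is_ring_hom tau ->
     (compatible tau phi <->
      forall (f : neural_ring D) (c : {x : cube n | x \in C}),
        phi f c = true -> tau (ext f) (val c) = true)).
Proof.
move=> hphi; have [p phiE] := ring_homP hphi.
split.
  pose q (x : cube n) : cube m :=
    if insub x is Some c then val (p c) else [ffun _ => false].
  exists (precomp q); split; first exact: precomp_ring_hom.
  by apply/(compatible_precompP phiE (frefl _)) => c; rewrite /q valK.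
move=> tau htau; have [q tauE] := ring_homP htau.
apply: iff_trans (compatible_precompP phiE tauE) _.
exact: iff_sym (support_precompP phiE tauE).
Qed.
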